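(* Let $d\ge 2$ and $x\in[-1,1]$, and let $\rho^{AC}$ be the state on $\mathcal{H}^A\otimes\mathcal{H}^C$ defined in the context. For $r=1,\dots,d$ define the vectors $|\mu^{(r)}_k\rangle\in\mathcal{H}^C$, $k=1,\dots,d$, by $|\mu^{(r)}_r\rangle=|\mu^{(+)}_{rr}\rangle$, $|\mu^{(r)}_k\rangle=\frac{1}{\sqrt2}\big(|\mu^{(+)}_{kr}\rangle+|\mu^{(-)}_{kr}\rangle\big)$ for $k<r$, and $|\mu^{(r)}_k\rangle=\frac{1}{\sqrt2}\big(|\mu^{(+)}_{rk}\rangle-|\mu^{(-)}_{rk}\rangle\big)$ for $k>r$, and the maximally entangled states $$|\Psi^{\max}_r\rangle=\frac{1}{\sqrt d}\sum_{k=1}^d |k\rangle\otimes|\mu^{(r)}_k\rangle,\qquad r=1,\dots,d.$$ (The family $\{|\mu^{(r)}_k\rangle\}_{r,k}$ is an orthonormal basis of $\mathcal{H}^C$.) Then the set of maximally entangled states that attains the maximum in the definition of the fully entangled fraction of $\rho^{AC}$ is $\{|\Psi^{\max}_r\rangle\}_{r=1}^d$, i.e. $$\mathcal{F}(\rho^{AC})=\sum_{r=1}^d\langle\Psi^{\max}_r|\rho^{AC}|\Psi^{\max}_r\rangle .$$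
   Context: Let $\mathcal{H}^A=\mathbb{C}^d$ with orthonormal basis $\{|1\rangle,\dots,|d\rangle\}$ and let $\mathcal{H}^C=\mathbb{C}^{d^2}$ with orthonormal basis $\{|\mu^{(+)}_{kl}\rangle\}_{1\le k\le l\le d}\cup\{|\mu^{(-)}_{kl}\rangle\}_{1\le k<l\le d}$. For $x\in[-1,1]$ put $\lambda_\pm=\frac{1\pm x}{d(d\pm1)}$, and let $\alpha,\theta\in[0,\pi/2]$ be defined by $\cos\alpha=\sqrt{d\lambda_+}$ and $\cos\theta=\sqrt{\lambda_+/(\lambda_++\lambda_-)}$. For $r=1,\dots,d$ let $$|\Psi_r\rangle=\cos\alpha\,|r\rangle|\mu^{(+)}_{rr}\rangle+\frac{\sin\alpha}{\sqrt{d-1}}\sum_{k=1}^{r-1}|k\rangle\big(\cos\theta|\mu^{(+)}_{kr}\rangle+\sin\theta|\mu^{(-)}_{kr}\rangle\big)+\frac{\sin\alpha}{\sqrt{d-1}}\sum_{k=r+1}^{d}|k\rangle\big(\cos\theta|\mu^{(+)}_{rk}\rangle-\sin\theta|\mu^{(-)}_{rk}\rangle\big),$$ and $\rho^{AC}=\frac1d\sum_{r=1}^d|\Psi_r\rangle\langle\Psi_r|$. (This $\rho^{AC}$ is obtained by tracing out $B$ from a purification on $\mathcal{H}^A\otimes\mathcal{H}^B\otimes\mathcal{H}^C$ of the $d\otimes d$ Werner state $\rho_{\mathrm w}^{AB}=\frac{d-x}{d^3-d}\mathbb{I}+\frac{dx-1}{d^3-d}F$, $F$ the swap.) Fully entangled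 fraction: for a state $\rho$ on $\mathbb{C}^d\otimes\mathbb{C}^{d^2}$ (so $d^2=Kd$ with $K=d$), fix an orthonormal basis $\{|e_m\rangle\}_{m=1}^{d^2}$ of the second factor and set $|\psi^{\max}_i\rangle=\frac1{\sqrt d}\sum_{j=1}^d|j\rangle\otimes|e_{j+(i-1)d}\rangle$, $i=1,\dots,d$; then $\mathcal{F}(\rho)=\max_{V}\sum_{i=1}^{d}\langle\psi^{\max}_i|(\mathbb{I}\otimes V)\rho(\mathbb{I}\otimes V^\dagger)|\psi^{\max}_i\rangle$, the maximum over all unitaries $V$ on the second factor. *)

From HB Require Import structures.
From mathcomp Require Import all_boot all_order all_algebra.
From mathcomp Require Import sesquilinear spectral.
From mathcomp Require Import complex mxtens.
Set Implicit Arguments. Unset Strict Implicit. Unset Printing Implicit Defensive.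
Import Order.TTheory GRing.Theory Num.Theory.
Local Open Scope ring_scope.

Section Defs.
Variable R : rcfType.
Local Notation C := (R[i]).

Definition toC (a : R) : C := Complex a 0.

Definition adj m n (M : 'M[C]_(m, n)) : 'M[C]_(n, m) := (map_mx Num.conj M)^T.

Definition ket n (i : 'I_n) : 'cV[C]_n := delta_mx i 0.

Definition tensv m n (u : 'cV[C]_m) (v : 'cV[C]_n) : 'cV[C]_(m * n) := u *t v.

Variable d : nat.

(* H^C = C^(d^2); orthonormal basis: mu^(+)_{kl} (k <= l) is the basis vector
   with index (k,l), mu^(-)_{kl} (k < l) the basis vector with index (l,k). *)
Definition muP (k l : 'I_d) : 'cV[C]_(d * d) := ket (mxtens_index (k, l)).
Definition muM (k l : 'I_d) : 'cV[C]_(d * d) := ket (mxtens_index (l, k)).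

Definition dR : R := d%:R.
Definition lam_plus (x : R) : R := (1 + x) / (dR * (dR + 1)).
Definition lam_minus (x : R) : R := (1 - x) / (dR * (dR - 1)).
(* alpha, theta in [0, pi/2] with cos alpha = sqrt(d lam_+),
   cos theta = sqrt(lam_+/(lam_+ + lam_-)); hence sin = sqrt(1 - cos^2). *)
Definition cos_alpha (x : R) : R := Num.sqrt (dR * lam_plus x).
Definition sin_alpha (x : R) : R := Num.sqrt (1 - dR * lam_plus x).
Definition cos_theta (x : R) : R :=
  Num.sqrt (lam_plus x / (lam_plus x + lam_minus x)).
Definition sin_theta (x : R) : R :=
  Num.sqrt (1 - lam_plus x / (lam_plus x + lam_minus x)).

Definition Psi (x : R) (r : 'I_d) : 'cV[C]_(d * (d * d)) :=
  toC (cos_alpha x) *: tensv (ket r) (muP r r)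
  + toC (sin_alpha x / Num.sqrt (dR - 1)) *:
      \sum_(k < d | (k < r)%N)
        tensv (ket k) (toC (cos_theta x) *: muP k r + toC (sin_theta x) *: muM k r)
  + toC (sin_alpha x / Num.sqrt (dR - 1)) *:
      \sum_(k < d | (r < k)%N)
        tensv (ket k) (toC (cos_theta x) *: muP r k - toC (sin_theta x) *: muM r k).

Definition rhoAC (x : R) : 'M[C]_(d * (d * d)) :=
  (toC dR)^-1 *: \sum_(r < d) (Psi x r *m adj (Psi x r)).

(* Fully entangled fraction on C^d (x) C^(d^2) (K = d): reference maximally
   entangled states psi_i = d^{-1/2} sum_j |j> (x) |e_{j+(i-1)d}>, where
   {e_m} is the standard basis of C^(d^2), with e_{j+(i-1)d} (1-based) being
   the basis vector of (0-based) index (i,j). *)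
Definition psi_ref (i : 'I_d) : 'cV[C]_(d * (d * d)) :=
  (toC (Num.sqrt dR))^-1 *: \sum_(j < d) tensv (ket j) (ket (mxtens_index (i, j))).

Definition fef_value (rho : 'M[C]_(d * (d * d))) (V : 'M[C]_(d * d)) : C :=
  \sum_(i < d)
    (adj (psi_ref i) *m ((1%:M *t V) *m rho *m adj (1%:M *t V)) *m psi_ref i) 0 0.

Definition is_FEF (rho : 'M[C]_(d * (d * d))) (f : C) : Prop :=
  (exists V : 'M[C]_(d * d), V \is unitarymx /\ fef_value rho V = f) /\
  (forall V : 'M[C]_(d * d), V \is unitarymx -> fef_value rho V <= f).

Definition mu_r (r k : 'I_d) : 'cV[C]_(d * d) :=
  if k == r then muP r r
  else if (k < r)%N then (toC (Num.sqrt 2))^-1 *: (muP k r + muM k r)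
  else (toC (Num.sqrt 2))^-1 *: (muP r k - muM r k).

Definition Psimax (r : 'I_d) : 'cV[C]_(d * (d * d)) :=
  (toC (Num.sqrt dR))^-1 *: \sum_(k < d) tensv (ket k) (mu_r r k).

End Defs.

(* In the basis mu^(a)_b of H^C, i.e. after the unitary U whose column |a,b> is
   mu^(a)_b, one has Psi_r = (1 (x) U) Phi_r with
   Phi_r = (1 (x) (p + q F)) sum_j |j>|r,j>, where F swaps the two factors of
   C^d (x) C^d and p +- q >= 0, while Psi^max_r = (1 (x) U) psi_r for the
   reference states psi_r.  Hence, for a unitary V, the fully entangled fraction
   functional is proportional to sum_(i,r) |<Omega_i| V U (p + q F) |Omega_r>|^2
   with Omega_r = sum_j |r,j>, and V = U^* gives the value d (d p + q)^2.
   Writing p + q F = S^2 with S = al + be F real, that sum is the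
   Hilbert-Schmidt pairing of V U S, of squared norm tr (p + q F) = d (d p + q),
   with a matrix of squared norm (d p + q) times the sum itself, so
   Cauchy-Schwarz bounds it by d (d p + q)^2. *)

From HB Require Import structures.
From mathcomp Require Import all_boot all_order all_algebra.
From mathcomp Require Import sesquilinear spectral.
From mathcomp Require Import complex mxtens.
From mathcomp Require Import ring lra.
Set Implicit Arguments. Unset Strict Implicit. Unset Printing Implicit Defensive.
Import Order.TTheory GRing.Theory Num.Theory.
Local Open Scope ring_scope.

Lemma sum_delta_mull (R : pzSemiRingType) (I : finType) (c : I) (F : I -> R) :
  \sum_(l : I) (l == c)%:R * F l = F c.
Proof.
rewrite (bigD1 c) //= eqxx mul1r big1 ?addr0 // => l /negPf ->.
by rewrite mul0r.
Qed.

Lemma sum_delta_mulr (R : pzSemiRingType) (I : finType) (c : I) (F : I -> R) :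
  \sum_(l : I) F l * (l == c)%:R = F c.
Proof.
rewrite -[RHS](sum_delta_mull c); apply: eq_bigr => l _.
by rewrite mulr_natr mulr_natl.
Qed.

Lemma sum_mxtens_pair (V : nmodType) m n (F : 'I_(m * n) -> V) :
  \sum_k F k = \sum_(s : 'I_m * 'I_n) F (mxtens_index s).
Proof.
rewrite (reindex (@mxtens_index m n)) //=.
by exists (@mxtens_unindex m n) => k _; rewrite (mxtens_indexK, mxtens_unindexK).
Qed.

Lemma mxtens_index_eq m n (a c : 'I_m) (b e : 'I_n) :
  (mxtens_index (a, b) == mxtens_index (c, e)) = (a == c) && (b == e).
Proof. by rewrite (can_eq (@mxtens_indexK m n)) xpair_eqE. Qed.

Lemma sum_pair (V : nmodType) (I J : finType) (F : I * J -> V) :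
  \sum_t F t = \sum_i \sum_j F (i, j).
Proof. by rewrite pair_big; apply: eq_bigr => -[]. Qed.

Lemma sum_mxtens_index (V : nmodType) m n (F : 'I_(m * n) -> V) :
  \sum_k F k = \sum_a \sum_b F (mxtens_index (a, b)).
Proof. by rewrite sum_mxtens_pair sum_pair. Qed.

Lemma ler_of_sqr_le_mulr (R : numDomainType) (a b : R) :
  0 <= a -> 0 <= b -> a ^+ 2 <= b * a -> a <= b.
Proof.
rewrite le0r => /orP[/eqP -> //| a_gt0] _.
by rewrite expr2 ler_pM2r.
Qed.

Lemma cauchy_schwarz_sum (C : numClosedFieldType) (I : finType) (a b : I -> C) :
  `|\sum_t a t * b t| ^+ 2 <= (\sum_t `|a t| ^+ 2) * (\sum_t `|b t| ^+ 2).
Proof.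
pose u := \row_(k < #|I|) a (enum_val k).
pose v := \row_(k < #|I|) (b (enum_val k))^*.
have reindex_enum (F : I -> C) : \sum_t F t = \sum_(k < #|I|) F (enum_val k).
  rewrite (reindex (@enum_val I predT)) //=.
  by exists (@enum_rank I) => k _; rewrite (enum_valK, enum_rankK).
have := (CauchySchwarz (@dotmx C #|I|) u v).1.
rewrite /dotmx /form_of_matrix /= !dotmxE !mxE !reindex_enum.
congr (`|_| ^+ 2 <= _ * _); apply: eq_bigr => k _; rewrite !mxE ?conjCK ?normCK //.
by rewrite mulrC.
Qed.

Lemma scale_sum_diff (R : comPzRingType) (V : lmodType R) (a b c e : R) (u v : V) :
  a *: (c *: (u + v)) + b *: (e *: (u - v)) = (a * c + b * e) *: u + (a * c - b * e) *: v.
Proof. by rewrite !scalerA scalerDr scalerBr scalerDl scalerBl addrACA. Qed.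

Lemma scale_diff_sum (R : comPzRingType) (V : lmodType R) (a b c e : R) (u v : V) :
  a *: (c *: (u - v)) + b *: (e *: (u + v)) = (a * c + b * e) *: u - (a * c - b * e) *: v.
Proof.
by rewrite !scalerA scalerBr scalerDr scalerDl scalerBl opprB addrACA [- _ + _]addrC.
Qed.

Lemma real_sqr_decomposition (C : numClosedFieldType) (p q : C) :
  0 <= p + q -> 0 <= p - q ->
  exists al be : C, [/\ al \is Num.real, be \is Num.real,
                      p = al ^+ 2 + be ^+ 2 & q = 2 * al * be].
Proof.
move=> pq_ge0 pmq_ge0.
pose s1 := sqrtC (p + q); pose s2 := sqrtC (p - q).
have s1R : s1 \is Num.real by rewrite ger0_real ?sqrtC_ge0.
have s2R : s2 \is Num.real by rewrite ger0_real ?sqrtC_ge0.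
have s1E : s1 ^+ 2 = p + q by exact: sqrtCK.
have s2E : s2 ^+ 2 = p - q by exact: sqrtCK.
clearbody s1 s2.
exists ((s1 + s2) / 2), ((s1 - s2) / 2); split.
- by rewrite realM ?realD ?realV ?realn.
- by rewrite realM ?realB ?realV ?realn.
- have -> : p = (s1 ^+ 2 + s2 ^+ 2) / 2 by rewrite s1E s2E; field.
  by field.
- have -> : q = (s1 ^+ 2 - s2 ^+ 2) / 2 by rewrite s1E s2E; field.
  by field.
Qed.

Lemma unitarymx_col_orthonormal (C : numClosedFieldType) n (N : 'M[C]_n) :
  N \is unitarymx -> forall l l', \sum_k (N k l)^* * N k l' = (l == l')%:R.
Proof.
rewrite -trmxC_unitary => /unitarymxP; rewrite trmxCK => NtN l l'.
have := congr1 (fun M : 'M[C]_n => M l l') NtN; rewrite /= !mxE => <-.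
by apply: eq_bigr => k _; rewrite !mxE.
Qed.

Section Overlap.
Variables (C : numClosedFieldType) (d : nat).
Local Notation ix a b := (@mxtens_index d d (a, b)).

(* [overlap N p q i r] is <Omega_i| N (p + q F) |Omega_r>, where
   Omega_r = sum_j |r,j> and F is the swap of the two tensor factors. *)
Definition overlap (N : 'M[C]_(d * d)) (p q : C) (i r : 'I_d) : C :=
  p * \sum_j N (ix i j) (ix r j) + q * \sum_j N (ix i j) (ix j r).

Lemma overlap1 p q i r : overlap 1%:M p q i r = (i == r)%:R * (d%:R * p + q).
Proof.
rewrite /overlap.
under eq_bigr => j _ do rewrite mxE mxtens_index_eq eqxx andbT.
under [X in _ + _ * X]eq_bigr => j _ do
  rewrite mxE mxtens_index_eq -mulnb natrM [i == _]eq_sym.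
by rewrite sumr_const card_ord sum_delta_mull -mulr_natl; ring.
Qed.

Section RealSquareRoot.
Variables (N : 'M[C]_(d * d)) (al be : C).
Hypothesis N_unitary : N \is unitarymx.
Hypotheses (al_real : al \is Num.real) (be_real : be \is Num.real).

Let p := al ^+ 2 + be ^+ 2.
Let q := 2 * al * be.
Let z := overlap N p q.
Let sqr_overlap := \sum_i \sum_r `|z i r| ^+ 2.

(* The entries of N S, where S = al + be F squares to p + q F. *)
Let NS (s t : 'I_d * 'I_d) : C :=
  al * N (mxtens_index s) (mxtens_index t) + be * N (mxtens_index s) (ix t.2 t.1).
Let w (s t : 'I_d * 'I_d) : C :=
  al * (t.2 == s.2)%:R * (z s.1 t.1)^* + be * (t.1 == s.2)%:R * (z s.1 t.2)^*.

Lemma sqr_overlap_pairing :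
  sqr_overlap = \sum_(u : ('I_d * 'I_d) * ('I_d * 'I_d)) NS u.1 u.2 * w u.1 u.2.
Proof.
have zE i r : z i r = \sum_j (al * NS (i, j) (r, j) + be * NS (i, j) (j, r)).
  rewrite /z /overlap !mulr_sumr -big_split.
  by apply: eq_bigr => j _; rewrite /NS /p /q /=; ring.
have row_pairing s : \sum_t NS s t * w s t =
    \sum_c (al * NS s (c, s.2) + be * NS s (s.2, c)) * (z s.1 c)^*.
  rewrite sum_pair.
  transitivity (\sum_c \sum_e ((e == s.2)%:R * (al * NS s (c, e) * (z s.1 c)^*) +
                              (c == s.2)%:R * (be * NS s (c, e) * (z s.1 e)^*))).
    by apply: eq_bigr => c _; apply: eq_bigr => e _; rewrite /w /=; ring.
  under eq_bigr => c _ do rewrite big_split /= sum_delta_mull -mulr_sumr.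
  rewrite big_split /= sum_delta_mull -big_split /=.
  by apply: eq_bigr => c _; ring.
rewrite !sum_pair; apply: eq_bigr => i _.
under [RHS]eq_bigr => j _ do rewrite row_pairing /=.
rewrite exchange_big /=; apply: eq_bigr => c _.
by rewrite zE normCK mulr_suml.
Qed.

Lemma sum_sqr_NS :
  \sum_(u : ('I_d * 'I_d) * ('I_d * 'I_d)) `|NS u.1 u.2| ^+ 2 = d%:R * (d%:R * p + q).
Proof.
have N_ortho l l' : \sum_s (N (mxtens_index s) l)^* * N (mxtens_index s) l' = (l == l')%:R.
  by rewrite -(sum_mxtens_pair (fun k => (N k l)^* * N k l')) unitarymx_col_orthonormal.
have col_norm c e : \sum_s `|NS s (c, e)| ^+ 2 = p + q * (c == e)%:R.
  transitivity (\sum_s (al ^+ 2 * ((N (mxtens_index s) (ix c e))^* * N (mxtens_index s) (ix c e))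
      + be ^+ 2 * ((N (mxtens_index s) (ix e c))^* * N (mxtens_index s) (ix e c))
      + al * be * ((N (mxtens_index s) (ix e c))^* * N (mxtens_index s) (ix c e))
      + al * be * ((N (mxtens_index s) (ix c e))^* * N (mxtens_index s) (ix e c)))).
    apply: eq_bigr => s _.
    by rewrite normCK /NS rmorphD !rmorphM /= (conj_Creal al_real) (conj_Creal be_real); ring.
  rewrite !big_split /= -!mulr_sumr !N_ortho !eqxx !mxtens_index_eq.
  by rewrite [e == c]eq_sym andbb /p /q /=; ring.
rewrite sum_pair exchange_big sum_pair /=.
under eq_bigr => c _ do under eq_bigr => e _ do rewrite col_norm eq_sym.
under eq_bigr => c _ do rewrite big_split /= sum_delta_mulr sumr_const card_ord.
by rewrite big_split /= !sumr_const !card_ord; ring.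
Qed.

Lemma sum_sqr_w :
  \sum_(u : ('I_d * 'I_d) * ('I_d * 'I_d)) `|w u.1 u.2| ^+ 2 = (d%:R * p + q) * sqr_overlap.
Proof.
rewrite !sum_pair /sqr_overlap mulr_sumr; apply: eq_bigr => i _.
have expand (x y : bool) (u v : C) :
    `|al * x%:R * u^* + be * y%:R * v^*| ^+ 2 =
    x%:R * (al ^+ 2 * `|u| ^+ 2) + y%:R * (be ^+ 2 * `|v| ^+ 2) +
    x%:R * (y%:R * (al * be * (u^* * v + v^* * u))).
  case: x; case: y;
    rewrite !normCK /= rmorphD !rmorphM /= (conj_Creal al_real) (conj_Creal be_real);
    by rewrite !conjCK ?rmorph_nat; ring.
have row_norm j : \sum_t `|w (i, j) t| ^+ 2 = p * \sum_c `|z i c| ^+ 2 + q * `|z i j| ^+ 2.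
  under eq_bigr => t _ do rewrite /w expand.
  rewrite sum_pair /=.
  under eq_bigr => c _ do rewrite !big_split /= sum_delta_mull -mulr_sumr sum_delta_mull.
  rewrite !big_split /= sum_delta_mull -!mulr_sumr sum_delta_mull (normCK (z i j)) /p /q.
  ring.
under eq_bigr => j _ do rewrite row_norm.
by rewrite big_split /= sumr_const card_ord -mulr_sumr; ring.
Qed.

Lemma sqr_overlap_le : sqr_overlap <= d%:R * (d%:R * p + q) ^+ 2.
Proof.
have sqr_overlap_ge0 : 0 <= sqr_overlap.
  by do 2![apply: sumr_ge0 => ? _]; exact: exprn_ge0.
have K_real : d%:R * p + q \is Num.real by rewrite /p /q !(realD, realM, realn, rpredX).
have := cauchy_schwarz_sum (fun u => NS u.1 u.2) (fun u => w u.1 u.2).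
rewrite -sqr_overlap_pairing sum_sqr_NS sum_sqr_w ger0_norm // => CS.
apply: ler_of_sqr_le_mulr => //; first by rewrite mulr_ge0 ?ler0n ?real_exprn_even_ge0.
suff -> : d%:R * (d%:R * p + q) ^+ 2 * sqr_overlap =
          d%:R * (d%:R * p + q) * ((d%:R * p + q) * sqr_overlap) by [].
by ring.
Qed.

End RealSquareRoot.

Lemma overlap_bound (N : 'M[C]_(d * d)) (p q : C) :
  N \is unitarymx -> 0 <= p + q -> 0 <= p - q ->
  \sum_i \sum_r `|overlap N p q i r| ^+ 2 <= d%:R * (d%:R * p + q) ^+ 2.
Proof.
move=> N_unitary /real_sqr_decomposition/[apply] -[al [be [al_real be_real -> ->]]].
exact: sqr_overlap_le.
Qed.

End Overlap.

Section ComplexMatrices.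
Variable R : rcfType.
Local Notation C := R[i].

Lemma toCE (a : R) : toC a = (a%:C)%C. Proof. by []. Qed.
Lemma toCM (a b : R) : toC (a * b) = toC a * toC b. Proof. by rewrite !toCE rmorphM. Qed.
Lemma toC_ge0 (a : R) : 0 <= a -> 0 <= toC a. Proof. by rewrite toCE ler0c. Qed.

Lemma adjE m n (M : 'M[C]_(m, n)) : adj M = (M ^t*)%sesqui.
Proof. by rewrite /adj map_trmx. Qed.

Lemma adj_entry m n (M : 'M[C]_(m, n)) i j : adj M i j = (M j i)^*.
Proof. by rewrite !mxE. Qed.

Lemma adjK m n (M : 'M[C]_(m, n)) : adj (adj M) = M.
Proof. by rewrite !adjE trmxCK. Qed.

Lemma adjM m n p (A : 'M[C]_(m, n)) (B : 'M[C]_(n, p)) : adj (A *m B) = adj B *m adj A.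
Proof. by rewrite /adj map_mxM trmx_mul. Qed.

Lemma adj_tens m n p q (A : 'M[C]_(m, n)) (B : 'M[C]_(p, q)) :
  adj (A *t B) = adj A *t adj B.
Proof. by rewrite /adj map_mxT trmx_tens. Qed.

Lemma adj_id n : adj (1%:M : 'M[C]_n) = 1%:M.
Proof. by apply/matrixP => i j; rewrite !mxE eq_sym rmorph_nat. Qed.

Lemma adj_unitary n (M : 'M[C]_n) : (adj M \is unitarymx) = (M \is unitarymx).
Proof. by rewrite adjE trmxC_unitary. Qed.

Lemma ketE n (i j : 'I_n) (o : 'I_1) : ket R i j o = (j == i)%:R.
Proof. by rewrite /ket mxE (ord1 o) andbT. Qed.

Lemma tensvE m n (u : 'cV[C]_m) (v : 'cV[C]_n) a b :
  tensv u v (mxtens_index (a, b)) 0 = u a 0 * v b 0.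
Proof. by rewrite /tensv !mxE mxtens_indexK /= !ord1. Qed.

Lemma tensvZ m n (c : C) (u : 'cV[C]_m) (v : 'cV[C]_n) :
  tensv u (c *: v) = c *: tensv u v.
Proof. by apply/matrixP => i j; rewrite !mxE mulrCA. Qed.

Lemma tens1_mul_tensv m n (N : 'M[C]_n) (u : 'cV[C]_m) (v : 'cV[C]_n) :
  (1%:M *t N) *m tensv u v = tensv u (N *m v).
Proof. by rewrite /tensv (tensmx_mul 1%:M N u v) mul1mx. Qed.

Lemma mulmx_conj_quad n (T rho : 'M[C]_n) (a : 'cV[C]_n) :
  adj a *m (T *m rho *m adj T) *m a = adj (adj T *m a) *m rho *m (adj T *m a).
Proof. by rewrite adjM adjK !mulmxA. Qed.

Lemma quad_scale_sum_outer n (I : finType) (b : 'cV[C]_n) (c : C) (Psi : I -> 'cV[C]_n) :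
  (adj b *m (c *: \sum_i Psi i *m adj (Psi i)) *m b) 0 0 =
  c * \sum_i `|(adj b *m Psi i) 0 0| ^+ 2.
Proof.
rewrite -scalemxAr -scalemxAl mxE mulmx_sumr mulmx_suml summxE; congr (_ * _).
apply: eq_bigr => i _.
rewrite !mulmxA -(mulmxA _ _ b) -[X in _ *m X]adjK adjM adjK.
by rewrite mxE big_ord1 adj_entry normCK.
Qed.

End ComplexMatrices.

Section MuBasis.
Variables (R : rcfType) (d : nat).
Local Notation C := R[i].
Local Notation ix a b := (@mxtens_index d d (a, b)).

Definition isqrt2 : C := (toC (Num.sqrt 2))^-1.

Lemma sqrt2C_neq0 : toC (Num.sqrt 2) != 0 :> C.
Proof. by rewrite toCE fmorph_eq0 sqrtr_eq0 -ltNge ltr0n. Qed.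

Lemma isqrt2_neq0 : isqrt2 != 0.
Proof. by rewrite invr_eq0 sqrt2C_neq0. Qed.

Lemma isqrt2_ge0 : 0 <= isqrt2.
Proof. by rewrite invr_ge0 toC_ge0 ?sqrtr_ge0. Qed.

Lemma isqrt2_sqr : isqrt2 * isqrt2 * 2 = 1.
Proof.
rewrite /isqrt2 -invfM toCE -rmorphM /= -expr2 sqr_sqrtr ?ler0n // rmorph_nat.
by rewrite mulVf ?pnatr_eq0.
Qed.

Definition mu_same (a b : 'I_d) : C := if b == a then 1 else isqrt2.
Definition mu_swap (a b : 'I_d) : C :=
  if b == a then 0 else if (b < a)%N then isqrt2 else - isqrt2.

Lemma mu_rE (a b u v : 'I_d) : mu_r R a b (ix u v) 0 =
  mu_same a b * ((u == a) && (v == b))%:R + mu_swap a b * ((u == b) && (v == a))%:R.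
Proof.
rewrite /mu_r /mu_same /mu_swap /muP /muM.
have [->|nba] := eqVneq b a; first by rewrite ketE mxtens_index_eq mul1r mul0r addr0.
by case: ifP => _; rewrite !mxE ?eqxx ?andbT !mxtens_index_eq /isqrt2; ring.
Qed.

Lemma mu_coef_real a b : mu_same a b \is Num.real /\ mu_swap a b \is Num.real.
Proof.
have isqrt2_real : isqrt2 \is Num.real by rewrite ger0_real ?isqrt2_ge0.
by split; rewrite /mu_same /mu_swap; do 2?case: ifP => _; rewrite ?realN ?real1 ?real0.
Qed.

Lemma mu_coef_orthonormal (a b a' b' : 'I_d) :
  mu_same a b * mu_same a' b' * ((a == a') && (b == b'))%:R +
  mu_same a b * mu_swap a' b' * ((a == b') && (b == a'))%:R +
  mu_swap a b * mu_same a' b' * ((b == a') && (a == b'))%:R +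
  mu_swap a b * mu_swap a' b' * ((b == b') && (a == a'))%:R = ((a == a') && (b == b'))%:R.
Proof.
have h2 := isqrt2_sqr.
rewrite /mu_same /mu_swap.
have [[ea eb]|ne_same] := eqVneq (a', b') (a, b).
  subst a' b'; rewrite !eqxx /=; have [_|nba] := eqVneq b a; first by rewrite /=; ring.
  by rewrite /=; case: ifP => _; ring: h2.
have [[ea eb]|ne_swap] := eqVneq (a', b') (b, a).
  subst a' b'.
  have nab : a != b by apply: contraNneq ne_same => ->.
  rewrite !eqxx [b == a]eq_sym (negPf nab) /=.
  by case: ltngtP => [_|_|/val_inj eq_ab]; [ring | ring | rewrite eq_ab eqxx in nab].
have ne1 : (a == a') && (b == b') = false.
  by apply: contraNF ne_same => /andP[/eqP-> /eqP->].
have ne2 : (a == b') && (b == a') = false.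
  by apply: contraNF ne_swap => /andP[/eqP-> /eqP->].
by rewrite ne1 ne2 [(b == a') && _]andbC [(b == b') && _]andbC ne1 ne2 /=; ring.
Qed.

Definition Umu : 'M[C]_(d * d) :=
  locked (\matrix_(k, l) mu_r R (mxtens_unindex l).1 (mxtens_unindex l).2 k 0).

Lemma UmuE k (a b : 'I_d) : Umu k (ix a b) = mu_r R a b k 0.
Proof. by rewrite /Umu -lock mxE mxtens_indexK. Qed.

Lemma Umu_ket a b : Umu *m ket R (ix a b) = mu_r R a b.
Proof. by apply/matrixP => k o; rewrite (ord1 o) /ket -colE mxE UmuE. Qed.

Lemma Umu_col_orthonormal (a b a' b' : 'I_d) :
  \sum_k (Umu k (ix a b))^* * Umu k (ix a' b') = ((a == a') && (b == b'))%:R.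
Proof.
have [s1R s2R] := mu_coef_real a b.
rewrite sum_mxtens_index -mu_coef_orthonormal.
pose dl (u v a b : 'I_d) : C := ((u == a) && (v == b))%:R.
have dl_pair (a1 b1 a2 b2 : 'I_d) :
    \sum_u \sum_v dl u v a1 b1 * dl u v a2 b2 = ((a1 == a2) && (b1 == b2))%:R.
  transitivity (\sum_k ((k == ix a1 b1)%:R * (k == ix a2 b2)%:R : C)).
    rewrite sum_mxtens_index; apply: eq_bigr => u _.
    by apply: eq_bigr => v _; rewrite !mxtens_index_eq.
  by rewrite sum_delta_mull mxtens_index_eq.
transitivity (\sum_u \sum_v (mu_same a b * mu_same a' b' * (dl u v a b * dl u v a' b') +
   mu_same a b * mu_swap a' b' * (dl u v a b * dl u v b' a') +
   mu_swap a b * mu_same a' b' * (dl u v b a * dl u v a' b') +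
   mu_swap a b * mu_swap a' b' * (dl u v b a * dl u v b' a'))).
  apply: eq_bigr => u _; apply: eq_bigr => v _.
  rewrite !UmuE !mu_rE rmorphD !rmorphM /= (conj_Creal s1R) (conj_Creal s2R) !rmorph_nat.
  by rewrite /dl; ring.
under eq_bigr => u _ do rewrite !big_split /= -!mulr_sumr.
by rewrite !big_split /= -!mulr_sumr !dl_pair.
Qed.

Lemma Umu_adj_mul : adj Umu *m Umu = 1%:M.
Proof.
apply/matrixP => l l'; rewrite !mxE.
case: (mxtens_indexP l) => a b; case: (mxtens_indexP l') => a' b'.
rewrite mxtens_index_eq -Umu_col_orthonormal; apply: eq_bigr => k _; by rewrite !mxE.
Qed.

Lemma Umu_unitary : Umu \is unitarymx.
Proof. by rewrite -adj_unitary adjE; apply/unitarymxP; rewrite trmxCK -adjE Umu_adj_mul. Qed.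

End MuBasis.

Arguments isqrt2 {R}.

Section WernerPurification.
Variables (R : rcfType) (d : nat) (x : R).
Hypotheses (d_ge2 : (2 <= d)%N) (x_range : -1 <= x <= 1).
Local Notation C := R[i].
Local Notation ix a b := (@mxtens_index d d (a, b)).
Local Notation ix3 a m := (@mxtens_index d (d * d) (a, m)).

Lemma cos_alphaE :
  cos_alpha d x = sin_alpha d x / Num.sqrt (dR R d - 1) * cos_theta d x * Num.sqrt 2.
Proof.
move: x_range => /andP[x_ge x_le].
rewrite /cos_alpha /sin_alpha /cos_theta /lam_plus /lam_minus.
have D_ge2 : 2 <= dR R d by rewrite /dR (ler_nat R 2 d).
set D := dR R d.
set lp := (1 + x) / (D * (D + 1)).
set lm := (1 - x) / (D * (D - 1)).
have D1 : 0 < D - 1 by lra.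
have sin2_ge0 : 0 <= 1 - D * lp.
  have -> : 1 - D * lp = (D - x) / (D + 1) by rewrite /lp; field; lra.
  by rewrite divr_ge0 //; lra.
have lpm_gt0 : 0 < lp + lm.
  have -> : lp + lm = 2 * (D - x) / (D * (D + 1) * (D - 1)) by rewrite /lp /lm; field; lra.
  by rewrite divr_gt0 ?mulr_gt0 //; lra.
have lp_ge0 : 0 <= lp by rewrite /lp divr_ge0 ?mulr_ge0 //; lra.
have a_ge0 : 0 <= (1 - D * lp) / (D - 1) by rewrite divr_ge0 // ltW.
have ac_ge0 : 0 <= (1 - D * lp) / (D - 1) * (lp / (lp + lm)).
  by rewrite mulr_ge0 // divr_ge0 // ltW.
rewrite -(sqrtrV (ltW D1)) -(sqrtrM _ sin2_ge0) -(sqrtrM _ a_ge0) -(sqrtrM _ ac_ge0).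
by f_equal; rewrite /lp /lm; field; rewrite !lt0r_neq0 //; nra.
Qed.

Definition amp : C := toC (sin_alpha d x / Num.sqrt (dR R d - 1)).
Definition p_coef : C := amp * (toC (cos_theta d x) + toC (sin_theta d x)) / (2 * isqrt2).
Definition q_coef : C := amp * (toC (cos_theta d x) - toC (sin_theta d x)) / (2 * isqrt2).

Lemma isqrt2_p_add_q : isqrt2 * (p_coef + q_coef) = amp * toC (cos_theta d x).
Proof. by rewrite /p_coef /q_coef; field; rewrite isqrt2_neq0. Qed.

Lemma isqrt2_p_sub_q : isqrt2 * (p_coef - q_coef) = amp * toC (sin_theta d x).
Proof. by rewrite /p_coef /q_coef; field; rewrite isqrt2_neq0. Qed.

Lemma p_add_q : p_coef + q_coef = toC (cos_alpha d x).
Proof.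
rewrite cos_alphaE toCM toCM -/amp -isqrt2_p_add_q /isqrt2 mulrAC.
by rewrite mulVf ?mul1r ?sqrt2C_neq0.
Qed.

Lemma p_add_q_ge0 : 0 <= p_coef + q_coef.
Proof. by rewrite p_add_q toC_ge0 ?sqrtr_ge0. Qed.

Lemma p_sub_q_ge0 : 0 <= p_coef - q_coef.
Proof.
have -> : p_coef - q_coef = isqrt2^-1 * (isqrt2 * (p_coef - q_coef)).
  by rewrite mulrA mulVf ?mul1r ?isqrt2_neq0.
rewrite isqrt2_p_sub_q !mulr_ge0 ?invr_ge0 ?isqrt2_ge0 ?toC_ge0 ?sqrtr_ge0 //.
by rewrite divr_ge0 ?sqrtr_ge0.
Qed.

Definition Phi (r : 'I_d) : 'cV[C]_(d * (d * d)) :=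
  \sum_j tensv (ket R j) (p_coef *: ket R (ix r j) + q_coef *: ket R (ix j r)).

Lemma PhiE r b l :
  Phi r (ix3 b l) 0 = p_coef * (l == ix r b)%:R + q_coef * (l == ix b r)%:R.
Proof.
rewrite /Phi summxE.
under eq_bigr => j _ do rewrite tensvE ketE !mxE !eqxx !andbT.
rewrite (eq_bigr (fun j =>
  (j == b)%:R * (p_coef * (l == ix r j)%:R + q_coef * (l == ix j r)%:R))).
  by rewrite sum_delta_mull.
by move=> j _; rewrite eq_sym.
Qed.

Lemma Psi_tens_Umu r : Psi x r = (1%:M *t Umu R d) *m Phi r.
Proof.
have cond_lt j : ((j != r) && (j < r)%N) = (j < r)%N.
  by rewrite -(inj_eq val_inj); case: ltngtP.
have cond_gt j : ((j != r) && ~~ (j < r)%N) = (r < j)%N.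
  by rewrite -(inj_eq val_inj); case: ltngtP.
rewrite /Phi mulmx_sumr.
under eq_bigr => j _ do rewrite tens1_mul_tensv mulmxDr -!scalemxAr !Umu_ket.
rewrite (bigD1 r) //= (bigID (fun j : 'I_d => (j < r)%N)) /= /Psi -addrA -/amp.
congr (_ + (_ + _)).
- by rewrite /mu_r eqxx -scalerDl tensvZ p_add_q.
- rewrite scaler_sumr; apply: eq_big => [j|j]; first by rewrite cond_lt.
  move=> jr; rewrite -tensvZ; congr tensv.
  rewrite /mu_r -!(inj_eq val_inj) /= (ltn_eqF jr) (gtn_eqF jr) jr ltnNge (ltnW jr) /=.
  rewrite scale_sum_diff scalerDr !scalerA.
  by rewrite -/isqrt2 -mulrDl -mulrBl !(mulrC _ isqrt2) isqrt2_p_add_q isqrt2_p_sub_q.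
- rewrite scaler_sumr; apply: eq_big => [j|j]; first by rewrite cond_gt.
  move=> rj; rewrite -tensvZ; congr tensv.
  rewrite /mu_r -!(inj_eq val_inj) /= (ltn_eqF rj) (gtn_eqF rj) rj ltnNge (ltnW rj) /=.
  rewrite scale_diff_sum scalerBr !scalerA.
  by rewrite -/isqrt2 -mulrDl -mulrBl !(mulrC _ isqrt2) isqrt2_p_add_q isqrt2_p_sub_q.
Qed.

Lemma Psimax_tens_Umu r : (1%:M *t Umu R d) *m psi_ref R r = Psimax R r.
Proof.
rewrite /psi_ref /Psimax -scalemxAr mulmx_sumr; congr (_ *: _).
by apply: eq_bigr => j _; rewrite tens1_mul_tensv Umu_ket.
Qed.

Definition isqrt_d : C := (toC (Num.sqrt (dR R d)))^-1.

Lemma psi_refE i a m : psi_ref R i (ix3 a m) 0 = isqrt_d * (m == ix i a)%:R.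
Proof.
rewrite /psi_ref mxE summxE; congr (_ * _).
under eq_bigr => j _ do rewrite tensvE !ketE.
rewrite (eq_bigr (fun j => (j == a)%:R * (m == ix i j)%:R)) ?sum_delta_mull //.
by move=> j _; rewrite eq_sym.
Qed.

Lemma tens1_mul_PhiE (N : 'M[C]_(d * d)) r a m :
  ((1%:M *t N) *m Phi r) (ix3 a m) 0 = p_coef * N m (ix r a) + q_coef * N m (ix a r).
Proof.
rewrite mxE sum_mxtens_index.
transitivity (\sum_b (b == a)%:R *
   \sum_l (p_coef * (N m l * (l == ix r b)%:R) + q_coef * (N m l * (l == ix b r)%:R))).
  apply: eq_bigr => b _; rewrite mulr_sumr; apply: eq_bigr => l _.
  by rewrite tensmxE mxE PhiE eq_sym; ring.
by rewrite sum_delta_mull big_split /= -!mulr_sumr !sum_delta_mulr.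
Qed.

Lemma psi_ref_overlap (N : 'M[C]_(d * d)) i r :
  (adj (psi_ref R i) *m (1%:M *t N) *m Phi r) 0 0 =
  isqrt_d^* * overlap N p_coef q_coef i r.
Proof.
rewrite -mulmxA mxE sum_mxtens_index /overlap mulrDr !mulr_sumr -big_split /=.
apply: eq_bigr => a _.
rewrite (eq_bigr (fun m => (m == ix i a)%:R *
  (isqrt_d^* * (p_coef * N m (ix r a) + q_coef * N m (ix a r))))) ?sum_delta_mull.
  by ring.
by move=> m _; rewrite adj_entry psi_refE tens1_mul_PhiE rmorphM /= rmorph_nat; ring.
Qed.

Lemma fef_valueE (V : 'M[C]_(d * d)) :
  fef_value (rhoAC d x) V =
  (toC (dR R d))^-1 * `|isqrt_d| ^+ 2 *
    \sum_i \sum_r `|overlap (V *m Umu R d) p_coef q_coef i r| ^+ 2.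
Proof.
rewrite /fef_value mulr_sumr; apply: eq_bigr => i _.
rewrite mulmx_conj_quad /rhoAC quad_scale_sum_outer -mulrA; congr (_ * _).
rewrite mulr_sumr; apply: eq_bigr => r _.
rewrite adjM adjK Psi_tens_Umu mulmxA -(mulmxA (adj (psi_ref R i))) tensmx_mul mul1mx.
by rewrite psi_ref_overlap normrM norm_conjC exprMn.
Qed.

Lemma fef_value_le_adj_Umu (V : 'M[C]_(d * d)) : V \is unitarymx ->
  fef_value (rhoAC d x) V <= fef_value (rhoAC d x) (adj (Umu R d)).
Proof.
move=> V_unitary.
have K_ge0 : 0 <= d%:R * p_coef + q_coef.
  have -> : d%:R * p_coef + q_coef =
            (d%:R + 1) / 2 * (p_coef + q_coef) + (d%:R - 1) / 2 * (p_coef - q_coef) by field.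
  have dS_ge0 : 0 <= d%:R + 1 :> C by rewrite natr1 ler0n.
  have dP_ge0 : 0 <= d%:R - 1 :> C by rewrite subr_ge0 (ler_nat _ 1 d) ltnW.
  have two_ge0 : 0 <= 2 :> C by rewrite ler0n.
  by apply: addr_ge0; apply: mulr_ge0; rewrite ?divr_ge0 ?p_add_q_ge0 ?p_sub_q_ge0.
have sum_overlap1 :
    \sum_i \sum_r `|overlap (1%:M : 'M_(d * d)) p_coef q_coef i r| ^+ 2 =
    d%:R * (d%:R * p_coef + q_coef) ^+ 2.
  under eq_bigr => i _ do under eq_bigr => r _ do
    rewrite overlap1 normrM exprMn normr_nat (ger0_norm K_ge0) expr2 -natrM mulnb andbb eq_sym.
  under eq_bigr => i _ do rewrite sum_delta_mull.
  by rewrite sumr_const -[#|_|]/#|'I_d| card_ord [RHS]mulr_natl.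
rewrite !fef_valueE Umu_adj_mul sum_overlap1 ler_wpM2l ?mulr_ge0 ?exprn_ge0 //.
  by rewrite invr_ge0 toC_ge0 ?ler0n.
apply: overlap_bound; rewrite ?p_add_q_ge0 ?p_sub_q_ge0 //.
exact: mul_unitarymx V_unitary (Umu_unitary R d).
Qed.

End WernerPurification.

Lemma fef_value_adj_Umu (R : rcfType) (d : nat) (rho : 'M[R[i]]_(d * (d * d))) :
  \sum_r (adj (Psimax R r) *m rho *m Psimax R r) 0 0 = fef_value rho (adj (Umu R d)).
Proof.
rewrite /fef_value; apply: eq_bigr => i _.
by rewrite mulmx_conj_quad adj_tens adj_id adjK Psimax_tens_Umu.
Qed.

Unset Implicit Arguments.

Theorem lemma1 (R : rcfType) (d : nat) (x : R) :
  (2 <= d)%N -> -1 <= x <= 1 ->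
  is_FEF (rhoAC d x)
    (\sum_(r < d) (adj (Psimax R r) *m rhoAC d x *m Psimax R r) 0 0).
Proof.
move=> d_ge2 x_range; rewrite fef_value_adj_Umu; split.
  by exists (adj (Umu R d)); rewrite adj_unitary Umu_unitary.
exact: fef_value_le_adj_Umu.
Qed.
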